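(* Let $(\Sigma,\theta)$ be a topological space. The subword topology on $\Sigma^*$ is the least fixed point of the map $S$ sending a topology $\tau$ on $\Sigma^*$ to the topology generated by the sets $\uparrow_{\le^*}(UV)$ for $U,V\in\tau$, and $\uparrow_{\le^*}W$ for $W\in\theta$.
   Context: $\Sigma^*$ is the set of finite words; $UV$ is concatenation of sets of words; elements of $\Sigma$ are identified with one-letter words. $\le$ is the specialisation preorder of $\theta$ ($x\le y$ iff every open set containing $x$ contains $y$). Higman's ordering: $u\le^* w$ iff there is a strictly increasing $h:\{1,\dots,|u|\}\to\{1,\dots,|w|\}$ with $u_i\le w_{h(i)}$ for all $i$; $\uparrow_{\le^*}E$ is the upward closure of $E$. The subword topology on $\Sigma^*$ is generated by the sets $\Sigma^*U_1\Sigma^*\cdots\Sigma^*U_n\Sigma^*$ with $n\ge0$ and $U_i\in\theta$. *)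

From Stdlib Require Import List Arith.
Import ListNotations.
Set Implicit Arguments.

Definition set_of (T : Type) := T -> Prop.

Definition is_topology (T : Type) (O : set_of (set_of T)) : Prop :=
  O (fun _ => True) /\
  (forall F : set_of (set_of T), (forall U, F U -> O U) ->
      O (fun x => exists U, F U /\ U x)) /\
  (forall U V, O U -> O V -> O (fun x => U x /\ V x)).

Definition generated (T : Type) (G : set_of (set_of T)) : set_of (set_of T) :=
  fun A => forall O, is_topology O -> (forall B, G B -> O B) -> O A.

Definition spec_le (S : Type) (theta : set_of (set_of S)) (x y : S) : Prop :=
  forall U, theta U -> U x -> U y.

(* Higman's ordering (0-based indices): u <=* w iff there is a strictly
   increasing h : {0..|u|-1} -> {0..|w|-1} with u_i <= w_{h i}. *)
Definition higman (S : Type) (theta : set_of (set_of S)) (u w : list S) : Prop :=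
  exists h : nat -> nat,
    (forall i j, i < j < length u -> h i < h j) /\
    (forall i, i < length u -> h i < length w) /\
    (forall i, i < length u -> exists a b,
        nth_error u i = Some a /\ nth_error w (h i) = Some b /\ spec_le theta a b).

Definition up_higman (S : Type) (theta : set_of (set_of S)) (E : set_of (list S))
  : set_of (list S) :=
  fun w => exists u, E u /\ higman theta u w.

Definition concat_set (S : Type) (U V : set_of (list S)) : set_of (list S) :=
  fun w => exists u v, U u /\ V v /\ w = u ++ v.

Definition letters (S : Type) (U : set_of S) : set_of (list S) :=
  fun w => exists a, U a /\ w = [a].

Definition all_words (S : Type) : set_of (list S) := fun _ => True.

(* Sigma^* U_1 Sigma^* ... Sigma^* U_n Sigma^* *)
Fixpoint subword_basic (S : Type) (Us : list (set_of S)) : set_of (list S) :=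
  match Us with
  | [] => @all_words S
  | U :: Us' => concat_set (@all_words S)
                  (concat_set (letters U) (subword_basic Us'))
  end.

Definition subword_topology (S : Type) (theta : set_of (set_of S))
  : set_of (set_of (list S)) :=
  generated (fun A => exists Us, Forall theta Us /\ A = subword_basic Us).

Definition S_map (S : Type) (theta : set_of (set_of S))
  (tau : set_of (set_of (list S))) : set_of (set_of (list S)) :=
  generated (fun A =>
    (exists U V, tau U /\ tau V /\ A = up_higman theta (concat_set U V)) \/
    (exists W, theta W /\ A = up_higman theta (letters W))).

From Stdlib Require Import List Arith Lia FunctionalExtensionality PropExtensionality.
Import ListNotations.

(* For open U_i the basic set Σ^* U_1 Σ^* ... U_n Σ^* is upward closed for
   Higman's ordering: a letter a in U_i and a <= b force b in U_i. Hence
   Σ^* U Σ^* = ↑U and Σ^* U_1 Σ^* ... U_n Σ^* = ↑(PQ) with P = Σ^* U_1 Σ^* and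
   Q = Σ^* U_2 Σ^* ... U_n Σ^*, so every basic open set is produced by S from
   smaller ones; this puts the subword topology inside its image under S and,
   by induction on n, inside every fixed point. Conversely ↑(UV) is
   subword-open for subword-open U and V: the sets Σ^* W_1 Σ^* ... W_k Σ^* with
   w_i in W_i form a neighbourhood base at w_1 ... w_k, and concatenating such
   neighbourhoods of u and of v gives a basic neighbourhood of uv, which is its
   own upward closure. *)

Set Implicit Arguments.
Unset Strict Implicit.

Lemma set_ext (T : Type) (A B : set_of T) : (forall x, A x <-> B x) -> A = B.
Proof.
  intro H. apply functional_extensionality; intro x.
  apply propositional_extensionality; auto.
Qed.

Lemma generated_topology (T : Type) (G : set_of (set_of T)) : is_topology (generated G).
Proof.
  split; [|split].
  - intros O HO HG. apply HO.
  - intros F HF O HO HG. apply HO. intros U HU. apply (HF U HU O HO HG).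
  - intros U V HU HV O HO HG. apply HO; [apply HU|apply HV]; auto.
Qed.

Lemma generated_incl (T : Type) (G : set_of (set_of T)) B : G B -> generated G B.
Proof. intros H O _ HG. auto. Qed.

Lemma generated_least (T : Type) (G O : set_of (set_of T)) A :
  is_topology O -> (forall B, G B -> O B) -> generated G A -> O A.
Proof. intros HO HG HA. exact (HA O HO HG). Qed.

Lemma is_topology_ext (T : Type) (O O' : set_of (set_of T)) :
  (forall A, O A <-> O' A) -> is_topology O -> is_topology O'.
Proof.
  intros E [H1 [H2 H3]]. split; [|split].
  - apply E; auto.
  - intros F HF. apply E, H2. intros U HU; apply E; auto.
  - intros U V HU HV. apply E, H3; apply E; auto.
Qed.

Section SubwordTopology.

Variable Sg : Type.
Variable th : set_of (set_of Sg).
Hypothesis th_top : is_topology th.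

Notation basic := (@subword_basic Sg).

Lemma basic_cons U Us w :
  basic (U :: Us) w <-> exists x a y, U a /\ basic Us y /\ w = x ++ a :: y.
Proof.
  simpl. unfold concat_set, letters. split.
  - intros (u & v & _ & (u' & v' & (a & Ha & ->) & Hv' & ->) & ->).
    exists u, a, v'. auto.
  - intros (x & a & y & Ha & Hy & ->). exists x, (a :: y).
    split; [exact I|split; [|reflexivity]]. exists [a], y. eauto.
Qed.

Lemma basic_app_l Us u v : basic Us v -> basic Us (u ++ v).
Proof.
  destruct Us as [|U Us]; intros H; [exact I|].
  apply basic_cons in H as (x & a & y & Ha & Hy & ->). apply basic_cons.
  exists (u ++ x), a, y. rewrite <- app_assoc. auto.
Qed.

Lemma basic_app Us Vs u v : basic Us u -> basic Vs v -> basic (Us ++ Vs) (u ++ v).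
Proof.
  revert u; induction Us as [|U Us IH]; intros u Hu Hv.
  - apply basic_app_l; auto.
  - apply basic_cons in Hu as (x & a & y & Ha & Hy & ->). apply basic_cons.
    exists x, a, (y ++ v). rewrite <- app_assoc. auto.
Qed.

Lemma basic_app_inv Us Vs w :
  basic (Us ++ Vs) w -> exists u v, basic Us u /\ basic Vs v /\ w = u ++ v.
Proof.
  revert w; induction Us as [|U Us IH]; intros w Hw.
  - exists [], w. split; [exact I|auto].
  - apply basic_cons in Hw as (x & a & y & Ha & Hy & ->).
    destruct (IH y Hy) as (y1 & y2 & H1 & H2 & ->).
    exists (x ++ a :: y1), y2. split; [apply basic_cons; eauto 6|].
    rewrite <- app_assoc. auto.
Qed.

Lemma nth_error_app_cons (x y : list Sg) a i :
  nth_error (x ++ a :: y) (length x + i) = nth_error (a :: y) i.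
Proof. rewrite nth_error_app2 by lia. f_equal. lia. Qed.

Lemma spec_le_refl a : spec_le th a a.
Proof. intros U _ H. exact H. Qed.

Lemma higman_refl u : higman th u u.
Proof.
  exists (fun i => i). split; [lia|split; [auto|]].
  intros i Hi. destruct (nth_error u i) as [a|] eqn:E.
  - exists a, a. auto using spec_le_refl.
  - apply nth_error_None in E. lia.
Qed.

Lemma higman_singleton_app x a y : higman th [a] (x ++ a :: y).
Proof.
  exists (fun _ => length x). split; [simpl; lia|split].
  - intros i _. rewrite length_app. simpl. lia.
  - intros i Hi. simpl in Hi. replace i with 0 by lia. exists a, a.
    rewrite <- (Nat.add_0_r (length x)), nth_error_app_cons. auto using spec_le_refl.
Qed.

(* Read off the image b of the letter a in w, and shift the remaining indices
   of the embedding of y past the position of b. *)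
Lemma higman_app_cons_inv x a y w :
  higman th (x ++ a :: y) w ->
  exists l1 b l2, w = l1 ++ b :: l2 /\ spec_le th a b /\ higman th y l2.
Proof.
  intros (h & Hmon & Hbd & Hnth).
  rewrite length_app in Hmon, Hbd, Hnth. simpl in Hmon, Hbd, Hnth.
  destruct (Hnth (length x + 0) ltac:(lia)) as (a' & b & E1 & E2 & Hle).
  rewrite nth_error_app_cons in E1. injection E1 as <-.
  destruct (nth_error_split w _ E2) as (l1 & l2 & -> & Hl1).
  rewrite Nat.add_0_r in Hl1.
  exists l1, b, l2. split; [reflexivity|split; [exact Hle|]].
  assert (Hgt : forall i, i < length y -> h (length x) < h (length x + S i))
    by (intros; apply Hmon; lia).
  exists (fun i => h (length x + S i) - S (h (length x))). split; [|split].
  - intros i j Hij. assert (h (length x + S i) < h (length x + S j)) by (apply Hmon; lia).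
    specialize (Hgt i ltac:(lia)). lia.
  - intros i Hi. specialize (Hbd (length x + S i) ltac:(lia)).
    rewrite length_app in Hbd. simpl in Hbd. specialize (Hgt i Hi). lia.
  - intros i Hi. destruct (Hnth (length x + S i) ltac:(lia)) as (a0 & b0 & F1 & F2 & Hl).
    exists a0, b0. rewrite nth_error_app_cons in F1. split; [exact F1|split; [|exact Hl]].
    specialize (Hgt i Hi).
    replace (h (length x + S i))
      with (length l1 + S (h (length x + S i) - S (h (length x)))) in F2 by lia.
    rewrite nth_error_app_cons in F2. exact F2.
Qed.

Lemma basic_up_closed Us u w :
  Forall th Us -> basic Us u -> higman th u w -> basic Us w.
Proof.
  revert u w; induction Us as [|U Us IH]; intros u w HF Hu Hh; [exact I|].
  inversion HF as [|? ? HU HUs]; subst.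
  apply basic_cons in Hu as (x & a & y & Ha & Hy & ->).
  destruct (higman_app_cons_inv Hh) as (l1 & b & l2 & -> & Hab & Hy').
  apply basic_cons. exists l1, b, l2. split; [exact (Hab U HU Ha)|eauto].
Qed.

Lemma up_letters W : th W -> up_higman th (letters W) = basic [W].
Proof.
  intro HW. apply set_ext. intro w. split.
  - intros (u & (a & Ha & ->) & Hh). apply (basic_up_closed (u := [a])); auto.
    apply basic_cons. exists [], a, []. split; [auto|split; [exact I|reflexivity]].
  - intro H. apply basic_cons in H as (x & a & y & Ha & _ & ->).
    exists [a]. split; [exists a; auto|apply higman_singleton_app].
Qed.

Lemma basic_cons_up_concat U Us :
  Forall th (U :: Us) -> basic (U :: Us) = up_higman th (concat_set (basic [U]) (basic Us)).
Proof.
  intro HF. apply set_ext. intro w. change (U :: Us) with ([U] ++ Us). split.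
  - intro H. apply basic_app_inv in H as (u & v & H1 & H2 & ->).
    exists (u ++ v). split; [exists u, v; auto|apply higman_refl].
  - intros (u & (u1 & u2 & H1 & H2 & ->) & Hh).
    apply (basic_up_closed (u := u1 ++ u2)); auto. apply basic_app; auto.
Qed.

Definition word_nbhd (Ws : list (set_of Sg)) (w : list Sg) : Prop :=
  Forall2 (fun W a => th W /\ W a) Ws w.

Lemma word_nbhd_open Ws w : word_nbhd Ws w -> Forall th Ws.
Proof. intro H; induction H; constructor; tauto. Qed.

Lemma word_nbhd_basic Ws w : word_nbhd Ws w -> basic Ws w.
Proof.
  intro H; induction H as [|W a Ws w [_ HW] _ IH]; [exact I|].
  apply basic_cons. exists [], a, w. auto.
Qed.

Lemma word_nbhd_full w : word_nbhd (map (fun _ _ => True) w) w.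
Proof. induction w; constructor; auto. split; [apply th_top|exact I]. Qed.

Lemma word_nbhd_meet Xs Ys w :
  word_nbhd Xs w -> word_nbhd Ys w ->
  exists Zs, word_nbhd Zs w /\ forall x, basic Zs x -> basic Xs x /\ basic Ys x.
Proof.
  intro H; revert Ys; induction H as [|X a Xs w [HX HXa] _ IH]; intros Ys HY.
  - inversion HY; subst. exists []. split; [constructor|split; exact I].
  - inversion HY as [|Y ? Ys' ? [HY' HYa] HYs]; subst.
    destruct (IH Ys' HYs) as (Zs & HZ & Hsub).
    exists ((fun b => X b /\ Y b) :: Zs). split.
    + constructor; auto. split; [apply th_top; auto|auto].
    + intros x Hx. apply basic_cons in Hx as (p & b & q & [Hb Hb'] & Hq & ->).
      destruct (Hsub q Hq). split; apply basic_cons; eauto 6.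
Qed.

Lemma basic_word_nbhd Us u :
  Forall th Us -> basic Us u ->
  exists Ws, word_nbhd Ws u /\ forall x, basic Ws x -> basic Us x.
Proof.
  revert u; induction Us as [|U Us IH]; intros u HF Hu.
  - exists (map (fun _ _ => True) u). split; [apply word_nbhd_full|]. intros; exact I.
  - inversion HF as [|? ? HU HUs]; subst.
    apply basic_cons in Hu as (x & a & y & Ha & Hy & ->).
    destruct (IH y HUs Hy) as (Wy & HWy & Hsub).
    exists (map (fun _ _ => True) x ++ U :: Wy). split.
    + apply Forall2_app; [apply word_nbhd_full|]. constructor; auto.
    + intros z Hz. apply basic_app_inv in Hz as (z1 & z2 & _ & Hz2 & ->).
      apply basic_app_l. apply basic_cons in Hz2 as (p & b & q & Hb & Hq & ->).
      apply basic_cons. exists p, b, q. auto.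
Qed.

Definition nbhd_open (A : set_of (list Sg)) : Prop :=
  forall w, A w -> exists Ws, word_nbhd Ws w /\ forall x, basic Ws x -> A x.

Lemma nbhd_open_topology : is_topology nbhd_open.
Proof.
  split; [|split].
  - intros w _. exists (map (fun _ _ => True) w). split; [apply word_nbhd_full|].
    intros; exact I.
  - intros F HF w (U & HU & Hw). destruct (HF U HU w Hw) as (Ws & H1 & H2).
    exists Ws. split; [exact H1|]. intros x Hx. exists U. auto.
  - intros U V HU HV w [Hu Hv].
    destruct (HU w Hu) as (Xs & HX & HXU). destruct (HV w Hv) as (Ys & HY & HYV).
    destruct (word_nbhd_meet HX HY) as (Zs & HZ & Hsub).
    exists Zs. split; [exact HZ|]. intros x Hx. destruct (Hsub x Hx). auto.
Qed.

Lemma nbhd_open_subword_open A : nbhd_open A -> subword_topology th A.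
Proof.
  intro HA.
  set (F := fun B : set_of (list Sg) =>
              exists Ws, Forall th Ws /\ B = basic Ws /\ forall x, B x -> A x).
  replace A with (fun x => exists B, F B /\ B x).
  - apply (generated_topology _). intros B (Ws & HWs & -> & _).
    apply generated_incl. eauto.
  - apply set_ext. intro x. split.
    + intros (B & (Ws & _ & _ & HB) & Hx). auto.
    + intro Hx. destruct (HA x Hx) as (Ws & H1 & H2). exists (basic Ws).
      split; [exists Ws; eauto using word_nbhd_open|apply (word_nbhd_basic H1)].
Qed.

Lemma subword_open_nbhd_open A : subword_topology th A -> nbhd_open A.
Proof.
  apply generated_least; [apply nbhd_open_topology|].
  intros B (Us & HUs & ->) w Hw. destruct (basic_word_nbhd HUs Hw) as (Ws & H1 & H2). eauto.
Qed.

Lemma up_concat_subword_open U V :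
  subword_topology th U -> subword_topology th V ->
  subword_topology th (up_higman th (concat_set U V)).
Proof.
  intros HU HV. apply subword_open_nbhd_open in HU, HV. apply nbhd_open_subword_open.
  intros w (z & (u & v & Hu & Hv & ->) & Hh).
  destruct (HU u Hu) as (Xs & HX & HXU). destruct (HV v Hv) as (Ys & HY & HYV).
  assert (HXY : Forall th (Xs ++ Ys))
    by (apply Forall_app; split; eapply word_nbhd_open; eauto).
  assert (Hw : basic (Xs ++ Ys) w).
  { apply (basic_up_closed (u := u ++ v)); auto.
    apply basic_app; eapply word_nbhd_basic; eauto. }
  destruct (basic_word_nbhd HXY Hw) as (Ws & HW & Hsub). exists Ws. split; [exact HW|].
  intros x Hx. apply Hsub, basic_app_inv in Hx as (x1 & x2 & H1 & H2 & ->).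
  exists (x1 ++ x2). split; [exists x1, x2; auto|apply higman_refl].
Qed.

Lemma S_map_subword_open A : S_map th (subword_topology th) A -> subword_topology th A.
Proof.
  apply generated_least; [apply generated_topology|].
  intros B [(U & V & HU & HV & ->) | (W & HW & ->)].
  - apply up_concat_subword_open; auto.
  - rewrite up_letters by exact HW. apply generated_incl. exists [W]. auto.
Qed.

Lemma subword_open_S_map A : subword_topology th A -> S_map th (subword_topology th) A.
Proof.
  apply generated_least; [apply generated_topology|].
  intros B ([|U Us] & HUs & ->).
  - apply generated_topology.
  - inversion HUs; subst. rewrite basic_cons_up_concat by exact HUs.
    apply generated_incl. left. exists (basic [U]), (basic Us).
    split; [apply generated_incl; exists [U]; auto|].
    split; [apply generated_incl; exists Us; auto|reflexivity].
Qed.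

Lemma subword_open_fixed_point (tau : set_of (set_of (list Sg))) :
  (forall A, S_map th tau A <-> tau A) ->
  forall A, subword_topology th A -> tau A.
Proof.
  intros Hfix A.
  assert (Htau : is_topology tau)
    by exact (is_topology_ext Hfix (generated_topology _)).
  apply generated_least; [exact Htau|].
  intros B (Us & HUs & ->). induction Us as [|U Us IH].
  - apply Htau.
  - inversion HUs; subst. rewrite basic_cons_up_concat by exact HUs.
    apply (proj1 (Hfix _)), generated_incl. left. exists (basic [U]), (basic Us).
    split; [|auto]. rewrite <- up_letters by assumption.
    apply (proj1 (Hfix _)), generated_incl. right. eauto.
Qed.

End SubwordTopology.

Theorem mainTheorem10 (Sigma : Type) (theta : set_of (set_of Sigma)) :
  is_topology theta ->
  (forall A, S_map theta (subword_topology theta) A <-> subword_topology theta A) /\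
  (forall tau : set_of (set_of (list Sigma)),
      (forall A, S_map theta tau A <-> tau A) ->
      forall A, subword_topology theta A -> tau A).
Proof.
  intro Ht. split.
  - intro A. split; [apply S_map_subword_open|apply subword_open_S_map]; auto.
  - apply subword_open_fixed_point.
Qed.
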